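(* Let $X$ be as in the standing setting with skeleton $X_1,\dots,X_k$. Suppose $x,y\in X$ each lie in no $\operatorname{span}X_l$, and $x\in\operatorname{pos}\{x_i,x_j\}$, $y\in\operatorname{pos}\{y_{i'},y_{j'}\}$ with $x_i\in X_i$, $x_j\in X_j$, $y_{i'}\in X_{i'}$, $y_{j'}\in X_{j'}$, $i\ne j$, $i'\ne j'$. Then the index sets $\{i,j\}$ and $\{i',j'\}$ are either equal or disjoint.
   Context: Standing setting: $X\subset\mathbb R^n\setminus\{0\}$ is a finite set such that $0$ lies in the interior of $\operatorname{conv}X$, no element of $X$ is a positive multiple of another, and every $n+1$ points of $X$ are in good position. A finite set $A$ is in conical position if $0\notin\operatorname{conv}A$ and no point of $A$ lies in the positive hull (set of nonnegative linear combinations, denoted $\operatorname{pos}$) of the other points; it is in good position otherwise. A skeleton of $X$ is a collection of pairwise disjoint subsets $X_1,\dots,X_k\subseteq X$ such that each $X_i$ is the vertex set of a simplex whose relative interior contains $0$ and $\mathbb R^n=\operatorname{span}X_1\oplus\cdots\oplus\operatorname{span}X_k$. *)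

From HB Require Import structures.
From mathcomp Require Import all_boot all_order all_algebra.
From mathcomp Require Import finmap.
From mathcomp Require Import reals.
Set Implicit Arguments. Unset Strict Implicit. Unset Printing Implicit Defensive.
Import Order.TTheory GRing.Theory Num.Theory.
Local Open Scope ring_scope.
Local Open Scope fset_scope.

Section Defs.
Variables (R : realType) (n : nat).
Notation vec := 'rV[R]_n.

Definition in_pos (A : {fset vec}) (v : vec) : Prop :=
  exists mu : vec -> R, (forall a, a \in A -> 0 <= mu a) /\
    v = \sum_(a <- A) mu a *: a.

Definition in_conv (A : {fset vec}) (v : vec) : Prop :=
  exists mu : vec -> R, [/\ forall a, a \in A -> 0 <= mu a,
    \sum_(a <- A) mu a = 1 & v = \sum_(a <- A) mu a *: a].

Definition in_aff (A : {fset vec}) (v : vec) : Prop :=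
  exists mu : vec -> R, \sum_(a <- A) mu a = 1 /\ v = \sum_(a <- A) mu a *: a.

Definition in_span (A : {fset vec}) (v : vec) : Prop :=
  exists mu : vec -> R, v = \sum_(a <- A) mu a *: a.

Definition conical_position (A : {fset vec}) : Prop :=
  ~ in_conv A 0 /\ forall a, a \in A -> ~ in_pos (A `\ a) a.

Definition good_position (A : {fset vec}) : Prop := ~ conical_position A.

Definition affinely_independent (A : {fset vec}) : Prop :=
  forall mu : vec -> R, \sum_(a <- A) mu a = 0 ->
    \sum_(a <- A) mu a *: a = 0 -> forall a, a \in A -> mu a = 0.

Definition in_interior_conv (A : {fset vec}) (v : vec) : Prop :=
  exists e : R, 0 < e /\ forall w : vec,
    (forall i, `|w ord0 i - v ord0 i| < e) -> in_conv A w.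

Definition in_relint_conv (A : {fset vec}) (v : vec) : Prop :=
  in_aff A v /\
  exists e : R, 0 < e /\ forall w : vec, in_aff A w ->
    (forall i, `|w ord0 i - v ord0 i| < e) -> in_conv A w.

Definition standing_setting (X : {fset vec}) : Prop :=
  [/\ (0 : vec) \notin X,
      in_interior_conv X 0,
      (forall x y (c : R), x \in X -> y \in X -> 0 < c -> y = c *: x -> y = x)
    & (forall A : {fset vec}, A `<=` X -> #|` A| = n.+1 -> good_position A)].

Definition skeleton (X : {fset vec}) (k : nat) (Xs : 'I_k -> {fset vec}) : Prop :=
  [/\ (forall l, Xs l `<=` X),
      (forall l l', l != l' -> [disjoint Xs l & Xs l']),
      (forall l, affinely_independent (Xs l) /\ in_relint_conv (Xs l) 0),
      (forall v : vec, exists w : 'I_k -> vec,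
          (forall l, in_span (Xs l) (w l)) /\ v = \sum_(l < k) w l)
    & (forall w : 'I_k -> vec, (forall l, in_span (Xs l) (w l)) ->
          \sum_(l < k) w l = 0 -> forall l, w l = 0)].

End Defs.

From HB Require Import structures.
From mathcomp Require Import all_boot all_order all_algebra.
From mathcomp Require Import finmap.
From mathcomp Require Import reals.
From mathcomp Require Import ring lra.
Set Implicit Arguments. Unset Strict Implicit. Unset Printing Implicit Defensive.
Import Order.TTheory GRing.Theory Num.Theory.
Local Open Scope fset_scope.
Local Open Scope ring_scope.

(* If the pairs {i, j} and {i', j'} share an index but differ, we may take them to be
   {i, j} and {i, j'} with j <> j'.  Every linear relation among the points of a block X_l
   is a multiple of the one expressing 0 as a relative interior point of conv X_l, whose
   coefficients are all positive.  Hence a relation among the points U of the skeleton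
   that vanishes at one point of a block vanishes on the whole block, and U minus one point
   per block still spans R^n.  Let A consist of x, y and the points of U outside D, where D
   holds one point of each block (x_i for X_i, neither x_j nor y_j otherwise) and one more
   point p of X_i with y_i in {x_i, p}; then |A| > n.  Substituting x = a x_i + b x_j and
   y = c y_i + d y_j turns a relation on A into one on U: the block X_j relates the
   coefficients of x and x_j, the block X_j' those of y and y_j, and the block X_i forces
   the coefficients of x and y to vanish together.  So a relation on A that is nonnegative
   outside one point is trivial, and any n + 1 points of A are in conical position,
   contradicting the standing setting. *)

Lemma pmul_addr_eq0 (R : numDomainType) (e f r : R) :
  0 < e -> 0 <= f -> 0 <= r -> f * e + r = 0 -> f = 0.
Proof.
move=> e0 f0 r0 /eqP; rewrite paddr_eq0 ?mulr_ge0 ?(ltW e0) // mulf_eq0 (gt_eqF e0).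
by rewrite orbF => /andP[/eqP].
Qed.

Lemma exists_fsubset_card (T : choiceType) (A : {fset T}) m : (m <= #|` A|)%N ->
  exists2 B, B `<=` A & #|` B| = m.
Proof.
move=> le_mA; exists [fset u in take m A].
  by apply/fsubsetP => u; rewrite inE => /mem_take.
by rewrite card_fseq undup_id ?size_takel // take_uniq // fset_uniq.
Qed.

Section LinearRelations.
Variables (R : realType) (n : nat).
Notation vec := 'rV[R]_n.
Implicit Types (A B Y : {fset vec}) (u v : vec).

Lemma sum_delta Y v (c : R) : v \in Y ->
  \sum_(u <- Y) (if u == v then c else 0) = c.
Proof.
move=> vY; rewrite (big_fsetD1 v) //= eqxx big1_fset ?addr0 // => u.
by rewrite !inE => /andP[/negPf -> _].
Qed.

Lemma sum_scale_delta Y v (c : R) : v \in Y ->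
  \sum_(u <- Y) (if u == v then c else 0) *: u = c *: v.
Proof.
move=> vY; rewrite (big_fsetD1 v) //= eqxx big1_fset ?addr0 // => u.
by rewrite !inE => /andP[/negPf -> _] _; rewrite scale0r.
Qed.

Lemma sum_scale_extend A B (g : vec -> R) : B `<=` A ->
  \sum_(u <- A) (if u \in B then g u else 0) *: u = \sum_(u <- B) g u *: u.
Proof.
move=> BA; rewrite -(big_fset_incl _ BA) => [|u _ /negPf ->]; last by rewrite scale0r.
by apply: eq_fbigr => u ->.
Qed.

Lemma in_span_scale Y v (c : R) : v \in Y -> in_span Y (c *: v).
Proof. by move=> vY; exists (fun u => if u == v then c else 0); rewrite sum_scale_delta. Qed.

Lemma affinely_independent_coef Y (mu nu : vec -> R) : affinely_independent Y ->
  \sum_(u <- Y) mu u = \sum_(u <- Y) nu u ->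
  \sum_(u <- Y) mu u *: u = \sum_(u <- Y) nu u *: u -> {in Y, mu =1 nu}.
Proof.
move=> indY sum_eq comb_eq u uY; apply/eqP; rewrite -subr_eq0; apply/eqP.
apply: (indY (fun v => mu v - nu v)) => //; first by rewrite sumrB sum_eq subrr.
by under eq_bigr do rewrite scalerBl; rewrite sumrB comb_eq subrr.
Qed.

Lemma affinely_independent_relation Y (m nu : vec -> R) : affinely_independent Y ->
  \sum_(u <- Y) m u = 1 -> \sum_(u <- Y) m u *: u = 0 ->
  \sum_(u <- Y) nu u *: u = 0 ->
  {in Y, forall u, nu u = (\sum_(v <- Y) nu v) * m u}.
Proof.
move=> indY m1 m_rel nu_rel; apply: affinely_independent_coef => //.
  by rewrite -mulr_sumr m1 mulr1.
by under [RHS]eq_bigr do rewrite -scalerA; rewrite -scaler_sumr m_rel scaler0.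
Qed.

(* Push 0 slightly outside along each direction [-q]: the point [-t q] is still in
   [conv Y], and its barycentric coordinates force [m q >= t / (1 + t)]. *)
Lemma relint0_pos_relation Y : affinely_independent Y -> in_relint_conv Y 0 ->
  exists m : vec -> R, [/\ {in Y, forall u, 0 < m u}, \sum_(u <- Y) m u = 1
    & \sum_(u <- Y) m u *: u = 0].
Proof.
move=> indY [[m [m1 /esym m_rel]] [e [e0 near_conv]]]; exists m; split => // q qY.
pose M := \sum_(i < n) `|q ord0 i|.
have M0 : 0 <= M by apply: sumr_ge0 => i _; exact: normr_ge0.
pose t := e / (1 + M).
have t0 : 0 < t by apply: divr_gt0 => //; lra.
have tM : t * (1 + M) = e by rewrite /t divfK //; apply: lt0r_neq0; lra.
pose rho u := (1 + t) * m u - (if u == q then t else 0).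
have rho1 : \sum_(u <- Y) rho u = 1.
  by rewrite sumrB -mulr_sumr m1 mulr1 sum_delta //; ring.
have rho_comb : \sum_(u <- Y) rho u *: u = (- t) *: q.
  under eq_bigr do rewrite scalerBl -scalerA.
  by rewrite sumrB -scaler_sumr m_rel scaler0 sum_scale_delta // sub0r scaleNr.
have [sig [sig0 sig1 sig_comb]] : in_conv Y ((- t) *: q).
  apply: near_conv => [|i]; first by exists rho.
  rewrite !mxE subr0 normrM normrN (gtr0_norm t0).
  have qiM : `|q ord0 i| <= M.
    by rewrite /M (bigD1 i) //= lerDl; apply: sumr_ge0 => l _; exact: normr_ge0.
  apply: (le_lt_trans (ler_wpM2l (ltW t0) qiM)); lra.
have := sig0 q qY; rewrite (affinely_independent_coef (nu := rho) indY _ _ qY); last 2 first.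
- by rewrite sig1 rho1.
- by rewrite -sig_comb rho_comb.
rewrite /rho eqxx => rho_q; nra.
Qed.

Definition semipositive_free A := forall (g : vec -> R) w,
  \sum_(u <- A) g u *: u = 0 -> {in A, forall u, u != w -> 0 <= g u} ->
  {in A, forall u, g u = 0}.

Lemma semipositive_free_conical A B :
  semipositive_free A -> B `<=` A -> conical_position B.
Proof.
move=> freeA BA; split.
  move=> [s [s0 s1 s_comb]].
  have s_eq0 : {in B, forall u, s u = 0}.
    move=> u uB.
    have pos : {in A, forall v, v != 0 -> 0 <= if v \in B then s v else 0}.
      by move=> v _ _; case: ifP => // /s0.
    have := freeA _ 0 _ pos u (fsubsetP BA u uB).
    by rewrite uB; apply; rewrite sum_scale_extend // -s_comb.
  move: s1; rewrite big1_fset => [/esym/eqP|u uB _]; last exact: s_eq0.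
  by rewrite oner_eq0.
move=> a aB [mu [mu0 a_comb]].
have aA : a \in A := fsubsetP BA a aB.
have BaA : B `\ a `<=` A := fsubset_trans (fsubsetDl B [fset a]) BA.
pose g u := (if u \in B `\ a then mu u else 0) - (if u == a then 1 else 0).
have g_rel : \sum_(u <- A) g u *: u = 0.
  under eq_bigr do rewrite scalerBl.
  by rewrite sumrB sum_scale_extend // sum_scale_delta // scale1r -a_comb subrr.
have pos : {in A, forall u, u != a -> 0 <= g u}.
  by move=> u _ /negPf ua; rewrite /g ua subr0; case: ifP => // /mu0.
have := freeA g a g_rel pos a aA; rewrite /g eqxx in_fsetD1 eqxx /= sub0r.
by move/eqP; rewrite oppr_eq0 oner_eq0.
Qed.

Lemma semipositive_free_card X A : standing_setting X -> A `<=` X ->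
  semipositive_free A -> (#|` A| <= n)%N.
Proof.
case=> _ _ _ good AX freeA; rewrite leqNgt; apply/negP => /exists_fsubset_card.
move=> [B BA cardB]; apply: (good B (fsubset_trans BA AX) cardB).
exact: semipositive_free_conical BA.
Qed.

End LinearRelations.

Section Skeleton.
Variables (R : realType) (n : nat) (X : {fset 'rV[R]_n}).
Variables (k : nat) (Xs : 'I_k -> {fset 'rV[R]_n}).
Hypothesis setX : standing_setting X.
Hypothesis skelX : skeleton X Xs.
Notation vec := 'rV[R]_n.
Implicit Types (u v : vec) (l : 'I_k).

Definition skel_points := \big[fsetU/fset0]_(l < k) Xs l.
Local Notation U := skel_points.

Lemma skel_pointsP u : reflect (exists l, u \in Xs l) (u \in U).
Proof.
apply: (iffP idP) => [/bigfcupP [l _ ul]|[l ul]]; first by exists l.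
by apply/bigfcupP; exists l; rewrite ?mem_index_enum.
Qed.

Lemma skel_block_sub l : Xs l `<=` U.
Proof. by apply/fsubsetP => u ul; apply/skel_pointsP; exists l. Qed.

Lemma skel_pointsX : U `<=` X.
Proof.
apply/fsubsetP => u /skel_pointsP [l ul]; case: skelX => sub _ _ _ _.
exact: (fsubsetP (sub l)).
Qed.

Lemma skel_block_uniq l l' u : u \in Xs l -> u \in Xs l' -> l = l'.
Proof.
case: skelX => _ disj _ _ _ ul ul'; apply/eqP; apply: contraT => /disj.
by move/fdisjointP/(_ u ul); rewrite ul'.
Qed.

Lemma skel_block_eqF l l' u v : u \in Xs l -> v \in Xs l' -> l != l' -> (u == v) = false.
Proof.
by move=> ul vl'; apply: contraNF => /eqP uv; apply/eqP/(skel_block_uniq ul); rewrite uv.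
Qed.

Lemma skel_sum (V : nmodType) (F : vec -> V) :
  \sum_(u <- U) F u = \sum_(l < k) \sum_(u <- Xs l) F u.
Proof.
have block l : \sum_(u <- Xs l) F u = \sum_(u <- U) (if u \in Xs l then F u else 0).
  rewrite -(big_fset_incl _ (skel_block_sub l)) => [|u _ /negPf -> //].
  by apply: eq_fbigr => u ->.
under [RHS]eq_bigr do rewrite block.
rewrite exchange_big /=; apply: eq_fbigr => u /skel_pointsP [l ul].
rewrite (bigD1 l) //= ul big1 ?addr0 // => l' l'l.
by case: ifP => // ul'; rewrite (skel_block_uniq ul' ul) eqxx in l'l.
Qed.

Lemma skel_relation_block (nu : vec -> R) l :
  \sum_(u <- U) nu u *: u = 0 -> \sum_(u <- Xs l) nu u *: u = 0.
Proof.
rewrite skel_sum => nu_rel; case: skelX => _ _ _ _ direct.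
by apply: (direct (fun l => \sum_(u <- Xs l) nu u *: u)) => // l'; exists nu.
Qed.

Lemma skel_block_pos_relation l : exists m : vec -> R,
  [/\ {in Xs l, forall u, 0 < m u}, \sum_(u <- Xs l) m u = 1
    & \sum_(u <- Xs l) m u *: u = 0].
Proof. by case: skelX => _ _ simplex _ _; case: (simplex l); apply: relint0_pos_relation. Qed.

(* Each block carries a unique linear relation, with all coefficients positive. *)
Lemma skel_relation_vanish (nu : vec -> R) l v :
  \sum_(u <- U) nu u *: u = 0 -> v \in Xs l -> nu v = 0 -> {in Xs l, nu =1 (fun=> 0)}.
Proof.
move=> nu_rel vl nu_v u ul; have [m [m0 m1 m_rel]] := skel_block_pos_relation l.
have indep : affinely_independent (Xs l) by case: skelX => _ _ /(_ l) [].
have prop := affinely_independent_relation indep m1 m_rel (skel_relation_block l nu_rel).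
move: nu_v; rewrite prop // => /eqP; rewrite mulf_eq0 (gt_eqF (m0 v vl)) orbF.
by move/eqP => s0; rewrite prop // s0 mul0r.
Qed.

Lemma skel_block_other l v : exists2 u, u \in Xs l & u != v.
Proof.
case: (boolP (has (predC1 v) (Xs l))) => [/hasP [u ul uv]|]; first by exists u.
rewrite has_predC negbK => /allP all_v; have [m [_ m1 m_rel]] := skel_block_pos_relation l.
have v0 : v = 0.
  rewrite -m_rel -[LHS]scale1r -m1 scaler_suml.
  by apply: eq_fbigr => u /all_v /eqP ->.
case: (fset_0Vmem (Xs l)) => [l0|[u ul]].
  by move: m1; rewrite l0 big_seq_fset0 => /eqP; rewrite eq_sym oner_eq0.
case: setX => notX0 _ _ _; move: (fsubsetP skel_pointsX u (fsubsetP (skel_block_sub l) u ul)).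
by rewrite (eqP (all_v u ul)) v0 (negPf notX0).
Qed.

Definition transversal (q : 'I_k -> vec) := \big[fsetU/fset0]_(l < k) [fset q l].

Lemma transversalP q u : reflect (exists l, u = q l) (u \in transversal q).
Proof.
apply: (iffP idP) => [/bigfcupP [l _]|[l ->]]; first by rewrite inE => /eqP ->; exists l.
by apply/bigfcupP; exists l; rewrite ?mem_index_enum ?inE.
Qed.

Lemma transversal_block q l u : (forall l, q l \in Xs l) -> u \in Xs l ->
  (u \in transversal q) = (u == q l).
Proof.
move=> qX ul; apply/transversalP/eqP => [[l' ul']|->]; last by exists l.
by move: ul; rewrite ul' => /(skel_block_uniq (qX l')) ->.
Qed.

Lemma card_skel_points_transversal q : (forall l, q l \in Xs l) ->
  (n <= #|` U `\` transversal q|)%N.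
Proof.
move=> qX; set V := <<(U `\` transversal q : seq vec)>>%VS.
have other_inV l u : u \in Xs l -> u != q l -> u \in V.
  move=> ul uq; apply: memv_span.
  by rewrite in_fsetD (transversal_block qX ul) uq (fsubsetP (skel_block_sub l)).
have UV u : u \in U -> u \in V.
  move=> /skel_pointsP [l ul]; have [->|] := eqVneq u (q l); last exact: other_inV.
  have [m [m0 _ m_rel]] := skel_block_pos_relation l.
  move: m_rel; rewrite (big_fsetD1 (q l)) //= => /eqP; rewrite addr_eq0 => /eqP qm.
  rewrite -[q l]scale1r -(mulVf (lt0r_neq0 (m0 _ (qX l)))) -scalerA qm.
  rewrite memvZ // memvN big_seq; apply: memv_suml => v.
  by rewrite in_fsetD1 => /andP[vq vl]; rewrite memvZ // (other_inV l).
have fullV : (fullv <= V)%VS.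
  apply/subvP => w _; case: skelX => _ _ _ spanning _; have [wl [wlS ->]] := spanning w.
  apply: memv_suml => l _; have [mu ->] := wlS l; rewrite big_seq; apply: memv_suml => u ul.
  by rewrite memvZ // UV // (fsubsetP (skel_block_sub l)).
by have := dimvS fullV; rewrite dimvf dim_matrix mul1r => /leq_trans; apply; exact: dim_span.
Qed.

Lemma skel_notin_span x : (forall l, ~ in_span (Xs l) x) -> x \notin U.
Proof.
move=> xS; apply/skel_pointsP => -[l xl]; apply: (xS l).
by rewrite -[x]scale1r; apply: in_span_scale.
Qed.

Lemma skel_pos_pair x xi xj i j : (forall l, ~ in_span (Xs l) x) ->
  xi \in Xs i -> xj \in Xs j -> i != j -> in_pos [fset xi; xj] x ->
  exists a b : R, [/\ 0 < a, 0 < b & x = a *: xi + b *: xj].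
Proof.
move=> xS xi_i xj_j ij [mu [mu0 x_comb]].
have xi_xj : xi \notin [fset xj] by rewrite inE (skel_block_eqF xi_i xj_j ij).
rewrite big_fsetU1 // big_seq_fset1 in x_comb.
have {}x_comb : x = mu xi *: xi + mu xj *: xj by [].
exists (mu xi), (mu xj); split => //; rewrite lt_def mu0 ?inE ?eqxx ?orbT // andbT.
- apply/eqP => mu_xi; apply: (xS j).
  by rewrite x_comb mu_xi scale0r add0r; apply: in_span_scale.
- apply/eqP => mu_xj; apply: (xS i).
  by rewrite x_comb mu_xj scale0r addr0; apply: in_span_scale.
Qed.

Section SharedBlock.
Variables (x y xi xj yi yj p : vec) (a b c d : R) (i j j' : 'I_k) (q : 'I_k -> vec).
Hypotheses (xX : x \in X) (yX : y \in X) (xU : x \notin U) (yU : y \notin U).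
Hypotheses (xi_i : xi \in Xs i) (xj_j : xj \in Xs j).
Hypotheses (yi_i : yi \in Xs i) (yj_j' : yj \in Xs j').
Hypotheses (ij : i != j) (ij' : i != j') (jj' : j != j').
Hypotheses (a0 : 0 < a) (b0 : 0 < b) (c0 : 0 < c) (d0 : 0 < d).
Hypotheses (x_comb : x = a *: xi + b *: xj) (y_comb : y = c *: yi + d *: yj).
Hypotheses (qX : forall l, q l \in Xs l) (qi : q i = xi).
Hypotheses (qj : q j != xj) (qj' : q j' != yj).
Hypotheses (p_i : p \in Xs i) (pxi : p != xi) (yi_xi_p : (yi == xi) || (yi == p)).

Let ji : j != i. Proof. by rewrite eq_sym. Qed.
Let j'i : j' != i. Proof. by rewrite eq_sym. Qed.
Let j'j : j' != j. Proof. by rewrite eq_sym. Qed.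

Let D := p |` transversal q.
Let A := x |` (y |` (U `\` D)).

Let inU l u : u \in Xs l -> u \in U.
Proof. exact: (fsubsetP (skel_block_sub l)). Qed.

Let mem_UD l u : u \in Xs l -> u != q l -> u != p -> u \in U `\` D.
Proof.
move=> ul uq up.
by rewrite in_fsetD (inU ul) andbT in_fset1U negb_or up (transversal_block qX ul) uq.
Qed.

Let xj_UD : xj \in U `\` D.
Proof. by rewrite (mem_UD xj_j) ?(skel_block_eqF xj_j p_i ji) // eq_sym. Qed.

Let yj_UD : yj \in U `\` D.
Proof. by rewrite (mem_UD yj_j') ?(skel_block_eqF yj_j' p_i j'i) // eq_sym. Qed.

Let qD l : q l \notin U `\` D.
Proof. by rewrite in_fsetD in_fset1U (transversal_block qX (qX l)) eqxx orbT. Qed.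

Let pD : p \notin U `\` D.
Proof. by rewrite in_fsetD in_fset1U eqxx. Qed.

(* The coefficients, on [U], of [s x + t y + sum_(u in U \ D) h u u]. *)
Let coef (s t : R) (h : vec -> R) u : R :=
  s * ((if u == xi then a else 0) + (if u == xj then b else 0)) +
  t * ((if u == yi then c else 0) + (if u == yj then d else 0)) +
  (if u \in U `\` D then h u else 0).

Let coef_sum s t h : \sum_(u <- U) coef s t h u *: u =
  s *: x + t *: y + \sum_(u <- U `\` D) h u *: u.
Proof.
rewrite x_comb y_comb -(sum_scale_extend _ (fsubsetDl U D)).
under eq_bigr do rewrite /coef !scalerDl -!scalerA !scalerDl !scalerDr.
rewrite !big_split /= -!scaler_sumr.
rewrite !sum_scale_delta ?(inU xi_i) ?(inU xj_j) ?(inU yi_i) ?(inU yj_j') //.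
by rewrite !scalerDr !addrA.
Qed.

Let q_xj l : q l != xj.
Proof. by have [->|lj] := eqVneq l j; rewrite // (skel_block_eqF (qX l) xj_j lj). Qed.

Let q_yj l : q l != yj.
Proof. by have [->|lj'] := eqVneq l j'; rewrite // (skel_block_eqF (qX l) yj_j' lj'). Qed.

Let coef_vanish s t h l : \sum_(u <- U) coef s t h u *: u = 0 -> l != i ->
  {in Xs l, coef s t h =1 (fun=> 0)}.
Proof.
move=> rel li; apply: (skel_relation_vanish rel (qX l)).
rewrite /coef (negPf (qD l)) (negPf (q_xj l)) (negPf (q_yj l)).
rewrite (skel_block_eqF (qX l) xi_i li) (skel_block_eqF (qX l) yi_i li).
by rewrite !addr0 !mulr0 addr0.
Qed.

Let coef_xj s t h : coef s t h xj = s * b + h xj.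
Proof.
rewrite /coef xj_UD eqxx (skel_block_eqF xj_j xi_i ji) (skel_block_eqF xj_j yi_i ji).
by rewrite (skel_block_eqF xj_j yj_j' jj'); ring.
Qed.

Let coef_yj s t h : coef s t h yj = t * d + h yj.
Proof.
rewrite /coef yj_UD eqxx (skel_block_eqF yj_j' xi_i j'i) (skel_block_eqF yj_j' xj_j j'j).
by rewrite (skel_block_eqF yj_j' yi_i j'i); ring.
Qed.

Let coef_xi s t h : coef s t h xi = s * a + t * (if xi == yi then c else 0).
Proof.
have := qD i; rewrite qi => /negPf xiD.
by rewrite /coef xiD eqxx (skel_block_eqF xi_i xj_j ij) (skel_block_eqF xi_i yj_j' ij'); ring.
Qed.

Let coef_p s t h : coef s t h p = t * (if p == yi then c else 0).
Proof.
rewrite /coef (negPf pD) (negPf pxi) (skel_block_eqF p_i xj_j ij).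
by rewrite (skel_block_eqF p_i yj_j' ij'); ring.
Qed.

Let coef_xy_eq0 s t h : \sum_(u <- U) coef s t h u *: u = 0 ->
  s = 0 \/ t = 0 -> s = 0 /\ t = 0.
Proof.
move=> rel [s0|t0].
  case/orP: yi_xi_p => /eqP yi_eq.
    have := skel_relation_vanish rel p_i; rewrite coef_p yi_eq (negPf pxi) mulr0.
    move=> /(_ erefl _ xi_i); rewrite coef_xi yi_eq eqxx s0 mul0r add0r.
    by move/eqP; rewrite mulf_eq0 (gt_eqF c0) orbF => /eqP ->.
  have := skel_relation_vanish rel xi_i; rewrite coef_xi s0 mul0r add0r.
  rewrite yi_eq eq_sym (negPf pxi) mulr0 => /(_ erefl _ p_i).
  by rewrite coef_p yi_eq eqxx => /eqP; rewrite mulf_eq0 (gt_eqF c0) orbF => /eqP ->.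
have := skel_relation_vanish rel p_i; rewrite coef_p t0 mul0r => /(_ erefl _ xi_i).
by rewrite coef_xi mul0r addr0 => /eqP; rewrite mulf_eq0 (gt_eqF a0) orbF => /eqP ->.
Qed.

Let x_neq_y : x != y.
Proof.
apply/eqP => xy; have rel : \sum_(u <- U) coef 1 (-1) (fun=> 0) u *: u = 0.
  rewrite coef_sum big1 => [|u _]; last exact: scale0r.
  by rewrite xy scaleN1r scale1r addr0 subrr.
have := coef_vanish rel ji xj_j; rewrite coef_xj mul1r addr0 => b_eq0.
by move: b0; rewrite b_eq0 ltxx.
Qed.

Let x_notin : x \notin y |` (U `\` D).
Proof. by rewrite in_fset1U negb_or x_neq_y in_fsetD (negPf xU) andbF. Qed.

Let y_notin : y \notin U `\` D.
Proof. by rewrite in_fsetD (negPf yU) andbF. Qed.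

Let card_A : (n < #|` A|)%N.
Proof.
rewrite /A !cardfsU1 x_notin y_notin add1n ltnS.
have sub : U `\` transversal q `<=` p |` (U `\` D).
  apply/fsubsetP => u; rewrite in_fsetD => /andP[uQ uU].
  by rewrite in_fset1U in_fsetD in_fset1U negb_or uQ uU; case: (u == p).
have := leq_trans (card_skel_points_transversal qX) (fsubset_leq_card sub).
by rewrite cardfsU1 => /leq_trans; apply; rewrite leq_add2r leq_b1.
Qed.

Let A_sub : A `<=` X.
Proof.
apply/fsubsetP => u; rewrite !in_fset1U => /or3P[/eqP-> // | /eqP-> // |].
by rewrite in_fsetD => /andP[_ /(fsubsetP skel_pointsX)].
Qed.

Let A_rel g : \sum_(u <- A) g u *: u = 0 ->
  \sum_(u <- U) coef (g x) (g y) g u *: u = 0.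
Proof. by rewrite coef_sum /A !big_fsetU1 ?x_notin ?y_notin //= addrA. Qed.

Let coef_x_or_y g w : \sum_(u <- A) g u *: u = 0 ->
  {in A, forall u, u != w -> 0 <= g u} -> g x = 0 \/ g y = 0.
Proof.
move=> /A_rel rel pos.
have xA : x \in A by rewrite /A fset1U1.
have yA : y \in A by rewrite /A in_fset1U fset1U1 orbT.
have xjA : xj \in A by rewrite /A !in_fset1U xj_UD !orbT.
have yjA : yj \in A by rewrite /A !in_fset1U yj_UD !orbT.
have [/andP[wx wxj]|] := boolP ((w != x) && (w != xj)).
  left; apply: (pmul_addr_eq0 (r := g xj) b0).
  - by apply: pos; rewrite // eq_sym.
  - by apply: pos; rewrite // eq_sym.
  by rewrite -(coef_xj _ (g y) g) (coef_vanish rel ji xj_j).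
rewrite negb_and !negbK => w_x; right.
have yw : y != w.
  by case/orP: w_x => /eqP->; [rewrite eq_sym | apply: contraNneq yU => ->; apply: inU xj_j].
have yjw : yj != w.
  case/orP: w_x => /eqP->; last by rewrite (skel_block_eqF yj_j' xj_j j'j).
  by apply: contraNneq xU => <-; apply: inU yj_j'.
apply: (pmul_addr_eq0 (r := g yj) d0); try exact: pos.
by rewrite -(coef_yj (g x) _ g) (coef_vanish rel j'i yj_j').
Qed.

Let A_free : semipositive_free A.
Proof.
move=> g w g_rel pos; have rel := A_rel g_rel.
have [gx0 gy0] := coef_xy_eq0 rel (coef_x_or_y g_rel pos).
move=> u; rewrite /A !in_fset1U => /or3P[/eqP-> // | /eqP-> // | uUD].
have [l ul] : exists l, u \in Xs l.
  by apply/skel_pointsP; move: uUD; rewrite in_fsetD => /andP[].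
have ql0 : coef (g x) (g y) g (q l) = 0.
  have [->|li] := eqVneq l i; last by rewrite (coef_vanish rel li (qX l)).
  by rewrite qi coef_xi gx0 gy0 !mul0r addr0.
have := skel_relation_vanish rel (qX l) ql0 ul.
by rewrite /coef gx0 gy0 !mul0r !add0r uUD.
Qed.

Lemma shared_block_absurd : False.
Proof. by have := semipositive_free_card setX A_sub A_free; rewrite leqNgt card_A. Qed.

End SharedBlock.

Lemma shared_block_eq x y xi xj yi yj i j j' :
  x \in X -> y \in X -> (forall l, ~ in_span (Xs l) x) -> (forall l, ~ in_span (Xs l) y) ->
  xi \in Xs i -> xj \in Xs j -> yi \in Xs i -> yj \in Xs j' -> i != j -> i != j' ->
  in_pos [fset xi; xj] x -> in_pos [fset yi; yj] y -> j = j'.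
Proof.
move=> xX yX xS yS xi_i xj_j yi_i yj_j' ij ij' xP yP.
apply/eqP; apply: contraT => jj'; exfalso.
have [a [b [a0 b0 x_comb]]] := skel_pos_pair xS xi_i xj_j ij xP.
have [c [d [c0 d0 y_comb]]] := skel_pos_pair yS yi_i yj_j' ij' yP.
pose v l := if l == j then xj else yj.
have avoid l : exists u, (u \in Xs l) && (u != v l).
  by have [u ul uv] := skel_block_other l (v l); exists u; rewrite ul uv.
pose q l := if l == i then xi else xchoose (avoid l).
have qX l : q l \in Xs l.
  by rewrite /q; case: eqP => [->|_] //; case/andP: (xchooseP (avoid l)).
have qv l : l != i -> q l != v l.
  by rewrite /q => /negPf ->; case/andP: (xchooseP (avoid l)).
have qj : q j != xj by move: (qv j); rewrite /v eqxx eq_sym; apply.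
have qj' : q j' != yj by move: (qv j'); rewrite /v (eq_sym j' j) (negPf jj') eq_sym; apply.
have [p0 p0_i p0xi] := skel_block_other i xi.
pose p := if yi == xi then p0 else yi.
have p_i : p \in Xs i by rewrite /p; case: ifP.
have pxi : p != xi by rewrite /p; case: ifP => // /negbT.
have yi_xi_p : (yi == xi) || (yi == p) by rewrite /p; case: ifP => //= _; rewrite eqxx.
apply: (shared_block_absurd xX yX (skel_notin_span xS) (skel_notin_span yS)
  xi_i xj_j yi_i yj_j' ij ij' jj' a0 b0 c0 d0 x_comb y_comb qX _ qj qj' p_i pxi yi_xi_p).
by rewrite /q eqxx.
Qed.

End Skeleton.

Theorem proposition5p2 (R : realType) (n : nat) (X : {fset 'rV[R]_n})
  (k : nat) (Xs : 'I_k -> {fset 'rV[R]_n}) :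
  standing_setting X -> skeleton X Xs ->
  forall (x y xi xj yi' yj' : 'rV[R]_n) (i j i' j' : 'I_k),
  x \in X -> y \in X ->
  (forall l, ~ in_span (Xs l) x) -> (forall l, ~ in_span (Xs l) y) ->
  xi \in Xs i -> xj \in Xs j -> i != j -> in_pos [fset xi; xj] x ->
  yi' \in Xs i' -> yj' \in Xs j' -> i' != j' -> in_pos [fset yi'; yj'] y ->
  ([set i; j] = [set i'; j'] :> {set 'I_k})%SET \/
  ([set i; j] :&: [set i'; j'] = set0 :> {set 'I_k})%SET.
Proof.
move=> setX skelX x y xi xj yi yj i j i' j' xX yX xS yS xi_i xj_j ij xP yi_i yj_j ij' yP.
have shared := shared_block_eq setX skelX xX yX xS yS.
have swap (u v : 'rV[R]_n) : [fset u; v] = [fset v; u] by rewrite fsetUC.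
have ji : j != i by rewrite eq_sym.
have j'i' : j' != i' by rewrite eq_sym.
case: (set_0Vmem ([set i; j] :&: [set i'; j'])%SET) => [->|[l l_ij]]; [by right | left].
move: l_ij; rewrite !inE => /andP[/orP[]/eqP-> /orP[]/eqP l_eq].
- rewrite -l_eq in yi_i ij' *.
  by rewrite (shared _ _ _ _ _ _ _ xi_i xj_j yi_i yj_j ij ij' xP yP).
- rewrite -l_eq in yj_j j'i' *; rewrite setUC.
  by rewrite (shared _ _ _ _ _ _ _ xi_i xj_j yj_j yi_i ij j'i' xP) // swap.
- rewrite -l_eq in yi_i ij' *; rewrite setUC.
  by rewrite (shared _ _ _ _ _ _ _ xj_j xi_i yi_i yj_j ji ij' _ yP) // swap.
- rewrite -l_eq in yj_j j'i' *.
  by rewrite (shared _ _ _ _ _ _ _ xj_j xi_i yj_j yi_i ji j'i') // swap.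
Qed.
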